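(* Under Assumptions 1 and 2 (stated in the context), there exists a constant $L_1$ such that for all $i,j,k$, all $t_1,t_2$ and all $\theta$ in the (bounded) domain, $$|\text{dist}(b_{ij}(t_1,\theta),o_k)-\text{dist}(b_{ij}(t_2,\theta),o_k)|\le L_1|t_1-t_2|.$$
   Context: An articulated robot consists of finitely many rigid bodies. For a finite-dimensional trajectory parameter vector $\theta$ and $t\in[0,T]$, the $i$-th body occupies $b_i(t,\theta)\subset\mathbb{R}^3$; obstacles occupy $o\subset\mathbb{R}^3$. $\text{dist}(A,B)$ is the shortest Euclidean distance between sets. The constraints of interest are $\text{dist}(b_i(t,\theta),o)\ge d_0$ for all $i$ and $t\in[0,T]$. Assumption 1: there are finite decompositions $b_i(t,\theta)=\bigcup_j b_{ij}(t,\theta)$, $o=\bigcup_k o_k$ such that for every triple $(i,j,k)$ the function $(t,\theta)\mapsto\text{dist}(b_{ij}(t,\theta),o_k)$ is sufficiently smooth. Assumption 2: the feasible domain of $t$ and $\theta$ is bounded. *)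

From HB Require Import structures.
From mathcomp Require Import all_boot all_order all_algebra.
From mathcomp Require Import all_classical all_reals all_analysis.
Set Implicit Arguments. Unset Strict Implicit. Unset Printing Implicit Defensive.
Import Order.TTheory GRing.Theory Num.Theory.
Import numFieldNormedType.Exports.
Local Open Scope classical_set_scope.
Local Open Scope ring_scope.

Notation R3 R := 'rV[R]_3.

(* Euclidean distance between two points of R^3 (the library norm on 'rV is
   the max norm, so we write the Euclidean one explicitly). *)
Definition eucl {R : realType} (x y : R3 R) : R :=
  Num.sqrt (\sum_(l < 3) (x ord0 l - y ord0 l) ^+ 2).

Definition dist {R : realType} (A B : set (R3 R)) : R :=
  inf [set d | exists x y, A x /\ B y /\ d = eucl x y].

(* "Sufficiently smooth" on an open set U: differentiable at every point of U
   with derivative depending continuously on the point (C^1), the continuity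
   of the derivative being expressed direction-wise. *)
Definition C1_on {R : realType} {V : normedModType R}
    (U : set V) (f : V -> R^o) : Prop :=
  open U /\
  (forall x, U x -> differentiable f x) /\
  (forall v : V, {within U, continuous (fun x => 'd f x v)}).

(* The distance function of each piece is C^1 on a neighbourhood of the
   compact set [0, T] x closure Theta, so its partial derivative in t is
   bounded there; by the mean value theorem it is Lipschitz in t, uniformly
   in theta.  Finitely many pieces then share a common constant. *)
From HB Require Import structures.
From mathcomp Require Import all_boot all_order all_algebra.
From mathcomp Require Import all_classical all_reals all_analysis.
Import Order.TTheory GRing.Theory Num.Theory.
Import numFieldNormedType.Exports.
Local Open Scope classical_set_scope.
Local Open Scope ring_scope.

Lemma finite_uniform_bound (R : realDomainType) (I : finType)
    (P : I -> R -> Prop) :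
  (forall i L L', L <= L' -> P i L -> P i L') ->
  (forall i, exists L, P i L) -> exists L, forall i, P i L.
Proof.
move=> P_mono /fin_all_exists[L PL]; exists (\sum_i `|L i|) => i.
apply: P_mono (PL i); apply: le_trans (ler_norm _) _.
by rewrite (bigD1 i) //= lerDl sumr_ge0.
Qed.

Lemma klipschitz_le (R : numFieldType) (V W : normedModType R) (A : set V)
    (f : V -> W) (k k' : R) :
  k <= k' -> k.-lipschitz_A f -> k'.-lipschitz_A f.
Proof.
move=> kk' fk p Ap; apply: le_trans (fk p Ap) _.
by apply: ler_wpM2r.
Qed.

Lemma bounded_closure (R : realType) (V : normedModType R) (A : set V) :
  bounded_set A -> bounded_set (closure A).
Proof.
move=> [M [Mreal AM]].
have AM1 x : A x -> `|x| <= M + 1 by apply: AM; rewrite ltrDl.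
have ball_closed : closed [set x : V | `|x| <= M + 1].
  rewrite -/((@Num.norm _ _) @^-1` [set x : R | x <= M + 1]).
  apply: (preimage_closed _ (@closed_le _ _)) => y _.
  exact: norm_continuous.
have clAM : closure A `<=` [set x : V | `|x| <= M + 1].
  by move=> x /(closureS AM1); rewrite -((closure_id _).1 ball_closed).
exists (M + 1); split; first by rewrite realD.
by move=> N MN x /clAM /le_trans; apply; apply: ltW.
Qed.

Lemma is_derive_fst (R : realType) (V W : normedModType R)
    (f : (R^o * V)%type -> W) (x : R) (y : V) :
  differentiable f (x, y) ->
  is_derive (x : R^o) 1 (fun t : R^o => f (t, y)) ('d f (x, y) (1, 0)).
Proof.
move=> df.
have quotE : (fun h : R => h^-1 *: (((fun t : R^o => f (t, y)) \o shift x)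
      (h *: (1 : R^o)) - f (x, y)))
    = (fun h : R => h^-1 *: ((f \o shift (x, y)) (h *: ((1 : R^o), (0 : V)))
      - f (x, y))).
  apply/funext => h /=; congr (_ *: (f _ - _)).
  by congr (_, _); rewrite /= ?scaler0 ?add0r.
apply: DeriveDef; first by rewrite /derivable quotE; apply: diff_derivable.
by rewrite /derive quotE -/(derive f (x, y) (1, 0)) deriveE.
Qed.

Lemma bounded_derive_klipschitz (R : realType) (f df : R -> R) (a b M : R) :
  (forall x, x \in `[a, b] -> is_derive x 1 f (df x)) ->
  (forall x, x \in `[a, b] -> `|df x| <= M) ->
  M.-lipschitz_(`[a, b]) f.
Proof.
move=> fdf dfM.
suff lip_le t1 t2 : t2 <= t1 -> t1 \in `[a, b] -> t2 \in `[a, b] ->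
    `|f t1 - f t2| <= M * `|t1 - t2|.
  move=> [t1 t2] [/= t1ab t2ab]; rewrite /self_sub /=.
  have [t21|t12] := leP t2 t1; first exact: lip_le.
  by rewrite distrC (distrC t1); apply: lip_le => //; apply: ltW.
move=> t21 t1ab t2ab.
have sub12 : `[t2, t1] `<=` `[a, b].
  by apply: subset_itv; rewrite bnd_simp ?(itvP t1ab) ?(itvP t2ab).
have fdf12 x : x \in `[t2, t1] -> is_derive x 1 f (df x).
  by move=> x12; apply: fdf; apply: sub12.
have f_cont : {within `[t2, t1], continuous f}.
  by apply: derivable_within_continuous => x /fdf12 [].
have [c c12 ->] := MVT_segment t21 (fun x x12 => fdf12 x (subset_itv_oo_cc x12)) f_cont.
rewrite normrM (ger0_norm (x := t1 - t2)) ?subr_ge0 //.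
by apply: ler_wpM2r; [rewrite subr_ge0 | apply: dfM; apply: sub12].
Qed.

Lemma C1_on_klipschitz_fst (R : realType) (n : nat) (T : R)
    (Theta : set 'rV[R]_n) (U : set (R^o * 'rV[R]_n)%type)
    (f : (R^o * 'rV[R]_n)%type -> R^o) :
  `[0, T] `*` closure Theta `<=` U -> C1_on U f -> bounded_set Theta ->
  exists L : R, forall th, Theta th -> L.-lipschitz_(`[0, T]) (fun t => f (t, th)).
Proof.
move=> KU [_ [fdiff dfcont]] Theta_bounded.
pose K := `[0, T] `*` closure Theta.
have K_compact : compact K.
  apply: compact_setX; first exact: segment_compact.
  apply: bounded_closed_compact; last exact: closed_closure.
  exact: bounded_closure.
pose dtf p := 'd f p ((1 : R^o), (0 : 'rV[R]_n)).
have dtf_cont : {within K, continuous dtf}.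
  exact: continuous_subspaceW KU (dfcont _).
have [M [_ dtfM]] := compact_bounded (continuous_compact dtf_cont K_compact).
exists (M + 1) => th Theta_th.
apply: (@bounded_derive_klipschitz _ _ (fun t => dtf (t, th))).
- move=> t t0T; apply/is_derive_fst/fdiff/KU.
  by split => //; apply: subset_closure.
- move=> t t0T; apply: dtfM; first by rewrite ltrDl.
  by exists (t, th) => //; split => //; apply: subset_closure.
Qed.

Theorem lemma1 (R : realType) (n : nat) (T : R)
  (* robot bodies, indexed by the finite type I *)
  (I : finType) (b : I -> R -> 'rV[R]_n -> set (R3 R))
  (* decomposition of body i into finitely many pieces indexed by J i *)
  (J : I -> finType) (bij : forall i : I, J i -> R -> 'rV[R]_n -> set (R3 R))
  (* obstacles and their finite decomposition indexed by K *)
  (o : set (R3 R)) (K : finType) (ok : K -> set (R3 R))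
  (* feasible domain of theta *)
  (Theta : set 'rV[R]_n)
  (* Assumption 1: decompositions *)
  (Hb : forall i t th, b i t th = \bigcup_(j in [set: J i]) bij i j t th)
  (Ho : o = \bigcup_(k in [set: K]) ok k)
  (* Assumption 1: smoothness of (t, theta) |-> dist(b_ij(t,theta), o_k) on an
     open neighbourhood of the closed feasible domain *)
  (Hsmooth : forall i (j : J i) (k : K), exists U : set (R^o * 'rV[R]_n)%type,
      `[0, T] `*` closure Theta `<=` U /\
      C1_on U (fun p : (R^o * 'rV[R]_n)%type => dist (bij i j p.1 p.2) (ok k)))
  (* Assumption 2: the feasible domain is bounded *)
  (HTheta : bounded_set Theta) :
  exists L1 : R, forall (i : I) (j : J i) (k : K) (t1 t2 : R) (th : 'rV[R]_n),
    t1 \in `[0, T] -> t2 \in `[0, T] -> th \in Theta ->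
    `|dist (bij i j t1 th) (ok k) - dist (bij i j t2 th) (ok k)| <= L1 * `|t1 - t2|.
Proof.
pose dist_piece (x : ({i : I & J i} * K)%type) t th :=
  dist (bij (tag x.1) (tagged x.1) t th) (ok x.2).
have [L lipL] : exists L : R, forall x th, Theta th ->
    L.-lipschitz_(`[0, T]) (dist_piece x ^~ th).
  apply: finite_uniform_bound => [x L L' LL' lipL th /lipL|[[i j] k]].
    exact: klipschitz_le.
  have [U [KU C1U]] := Hsmooth i j k.
  exact: C1_on_klipschitz_fst KU C1U HTheta.
exists L => i j k t1 t2 th t1T t2T /[!inE] Theta_th.
exact: (lipL (Tagged J j, k) th Theta_th (t1, t2)).
Qed.
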